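(* Let $q,r,\mu,\nu$ be positive integers. For all $z\in\mathbb{C}$, \[ \mathcal{M}(z)=(I_\mu\otimes U_q(z))\,\mathcal{A}\,(I_\nu\otimes W_r(z)), \] and $\mathcal{M}(z)$ and $\mathcal{A}$ have the same rank, equal to $\min\{\mu,r\}\cdot\min\{\nu,q\}$.
   Context: Matrix indices start at $0$. $u(z)=(1,z,\dots,z^{q-1})^\top$, $w(z)=(1,z,\dots,z^{r-1})$, $M(z)=u(z)w(z)\in\mathbb{C}^{q\times r}$, and $M^{(k)}$ denotes the $k$-th derivative in $z$. $\mathcal{M}(z)\in\mathbb{C}^{\mu q\times\nu r}$ is the block matrix with $(i,j)$ block $M^{(i+j)}(z)$, $i=0,\dots,\mu-1$, $j=0,\dots,\nu-1$. $U_q(z)=(u(z),u'(z),\dots,u^{(q-1)}(z))\in\mathbb{C}^{q\times q}$ and $W_r(z)\in\mathbb{C}^{r\times r}$ is the matrix whose $i$-th row is $w^{(i)}(z)$, $i=0,\dots,r-1$. $\mathcal{A}\in\mathbb{R}^{\mu q\times\nu r}$ is the block matrix with $(i,j)$ block $A^{i+j}$, where $A^k\in\mathbb{R}^{q\times r}$ has entries $A^k_{ab}=\binom{k}{a}$ if $a+b=k$ and $0$ otherwise. *)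

From HB Require Import structures.
From mathcomp Require Import all_boot all_order all_algebra.
From mathcomp Require Import reals.
From mathcomp.real_closed Require Import complex mxtens.
Set Implicit Arguments. Unset Strict Implicit. Unset Printing Implicit Defensive.
Import Order.TTheory GRing.Theory Num.Theory.
Local Open Scope ring_scope.

(* Block indexing: index i of 'I_(m*n) <-> pair (i %/ n, i %% n), block-row major,
   via mathcomp's mxtens_unindex (consistent with the Kronecker product tensmx). *)

(* k-th derivative (in z) of M(z) = u(z) w(z), i.e. of the matrix (z^(a+b))_{a<q,b<r}. *)
Definition Mder (C : fieldType) (q r k : nat) (z : C) : 'M[C]_(q, r) :=
  \matrix_(a < q, b < r) (('X^(a + b) : {poly C})^`(k)).[z].

Definition calM (C : fieldType) (mu nu q r : nat) (z : C) : 'M[C]_(mu * q, nu * r) :=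
  \matrix_(i, j) Mder q r ((mxtens_unindex i).1 + (mxtens_unindex j).1) z
                          (mxtens_unindex i).2 (mxtens_unindex j).2.

Definition Umx (C : fieldType) (q : nat) (z : C) : 'M[C]_q :=
  \matrix_(a < q, j < q) (('X^a : {poly C})^`(j)).[z].

Definition Wmx (C : fieldType) (r : nat) (z : C) : 'M[C]_r :=
  \matrix_(i < r, b < r) (('X^b : {poly C})^`(i)).[z].

Definition Ak (R : pzRingType) (q r k : nat) : 'M[R]_(q, r) :=
  \matrix_(a < q, b < r) (if (a + b == k)%N then ('C(k, a))%:R else 0).

Definition calA (R : pzRingType) (mu nu q r : nat) : 'M[R]_(mu * q, nu * r) :=
  \matrix_(i, j) Ak R q r ((mxtens_unindex i).1 + (mxtens_unindex j).1)
                          (mxtens_unindex i).2 (mxtens_unindex j).2.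

From HB Require Import structures.
From mathcomp Require Import all_boot all_order all_algebra.
From mathcomp Require Import zify reals.
From mathcomp.real_closed Require Import complex mxtens.
Set Implicit Arguments. Unset Strict Implicit. Unset Printing Implicit Defensive.
Import Order.TTheory GRing.Theory Num.Theory.
Local Open Scope ring_scope.

(* Each entry of M^(k)(z) is the k-th derivative of z^a * z^b, so Leibniz's rule
   gives M^(k) = sum_c C(k, c) u^(c) w^(k-c) = U_q A^k W_r; blockwise this is the
   factorization, and it preserves rank because U_q and W_r are triangular with
   diagonal entries a!.  For the rank of A, Vandermonde's identity splits every
   C(i+j, c) through an intermediate index (f, e) < (min(mu, r), min(nu, q)),
   writing A = X Y; both X^T and Y are unitriangular in one coordinate of that
   index, hence have full row rank min(mu, r) * min(nu, q). *)

Lemma big_mxtens_index (V : nmodType) m n (G : 'I_(m * n) -> V) :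
  \sum_(k < m * n) G k = \sum_(i < m) \sum_(j < n) G (mxtens_index (i, j)).
Proof.
rewrite pair_big /= (reindex (@mxtens_index m n)) /=; last first.
  by exists (@mxtens_unindex m n) => x _; rewrite ?mxtens_indexK ?mxtens_unindexK.
by apply: eq_bigr => -[i j] _.
Qed.

Lemma eq_sum_ord_supp (V : nmodType) m n (F G : nat -> V) :
  (forall k, (if (k < m)%N then F k else 0) = (if (k < n)%N then G k else 0)) ->
  \sum_(k < m) F k = \sum_(k < n) G k.
Proof.
move=> FG; rewrite (big_ord_widen (m + n) F) ?leq_addr //.
rewrite (big_ord_widen (m + n) G) ?leq_addl // big_mkcond [RHS]big_mkcond.
by apply: eq_bigr => k _.
Qed.

Lemma sum_antidiagonal (V : nmodType) (q r k : nat) (F : nat -> nat -> V) :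
  (forall c d, (q <= c)%N -> F c d = 0) -> (forall c d, (r <= d)%N -> F c d = 0) ->
  \sum_(c < q) \sum_(d < r) (if (c + d == k)%N then F c d else 0)
    = \sum_(c < k.+1) F c (k - c)%N.
Proof.
move=> Fq Fr.
apply: (@eq_sum_ord_supp _ q k.+1
  (fun c => \sum_(d < r) if (c + d == k)%N then F c d else 0)
  (fun c => F c (k - c)%N)) => c.
have [ck|kc] := leqP c k; last first.
  rewrite [RHS]ifN -?leqNgt //.
  by case: ifP => // _; apply: big1 => d _; rewrite ifN //; lia.
have -> : (c < k.+1)%N by [].
have cdk d : (c + d == k)%N = (d == k - c)%N by apply/eqP/eqP; lia.
under eq_bigr => d _ do rewrite cdk.
rewrite -big_mkcond big_ord1_eq.
case: ltnP => [_ | /Fq -> //]; case: ltnP => // /Fr -> //.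
Qed.

Lemma unitriangular_kernel (R : pzRingType) F E
    (T : 'I_F -> 'I_E -> 'I_F -> 'I_E -> R) (v : 'I_F -> 'I_E -> R) :
  (forall (f f' : 'I_F) e e', (f < f')%N -> T f e f' e' = 0) ->
  (forall f e e', T f e f e' = (e == e')%:R) ->
  (forall f e, \sum_(f' < F) \sum_(e' < E) v f' e' * T f e f' e' = 0) ->
  forall f e, v f e = 0.
Proof.
move=> T_upper T_diag vT0.
suff v0 n (f : 'I_F) e : (f < n)%N -> v f e = 0 by move=> f e; apply: (v0 f.+1).
elim: n f e => [|n IH] f e //; rewrite ltnS leq_eqVlt => /predU1P[fn|]; last exact: IH.
have := vT0 f e; rewrite (bigD1 f) //= [X in _ + X]big1 ?addr0 => [|f' f'_neq_f]; last first.
  apply: big1 => e' _; have [lt_ff'|lt_f'f|/val_inj eq_ff'] := ltngtP f f'.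
  - by rewrite T_upper ?mulr0.
  - by rewrite IH ?mul0r // -fn.
  - by rewrite eq_ff' eqxx in f'_neq_f.
rewrite (bigD1 e) //= T_diag eqxx mulr1 big1 ?addr0 // => e' e'e.
by rewrite T_diag eq_sym (negbTE e'e) mulr0.
Qed.

Lemma derivnM (R : nzRingType) (p q : {poly R}) k :
  (p * q)^`(k) = \sum_(c < k.+1) p^`(c) * q^`(k - c) *+ 'C(k, c).
Proof.
elim: k => [|k IH]; first by rewrite big_ord1 !derivn0.
rewrite derivnS IH raddf_sum /=.
under eq_bigr => c _ do rewrite derivMn derivM mulrnDl.
rewrite big_split /= [X in _ + X]big_ord_recl [in RHS]big_ord_recl.
under [X in _ + (_ + X)]eq_bigr => i _ do rewrite lift0.
under [in RHS]eq_bigr => i _ do rewrite lift0 binS mulrnDr subSS.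
rewrite big_split /= [X in _ = _ + (X + _)]big_ord_recr /=.
rewrite (bin_small (ltnSn k)) mulr0n addr0.
rewrite addrC -addrA; congr (_ + (_ + _)).
  by rewrite !bin0 subn0.
by apply: eq_bigr => i _; rewrite -[(q^`(_))^`()]derivnS subnSK.
Qed.

Lemma derivn_polyXn_small (R : nzRingType) a c :
  (a < c)%N -> ('X^a : {poly R})^`(c) = 0.
Proof. by move=> ac; rewrite derivn_poly0 // size_polyXn. Qed.

Lemma tens1mx_mulmxE (R : comNzRingType) mu q n (U : 'M[R]_q) (B : 'M[R]_(mu * q, n))
    (i : 'I_mu) (a : 'I_q) l :
  ((1%:M *t U) *m B) (mxtens_index (i, a)) l
    = \sum_(c < q) U a c * B (mxtens_index (i, c)) l.
Proof.
rewrite mxE big_mxtens_index (bigD1 i) //= [X in _ + X]big1 ?addr0.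
  by apply: eq_bigr => c _; rewrite tensmxE mxE eqxx mul1r.
move=> i' ne; apply: big1 => c _.
by rewrite tensmxE mxE eq_sym (negbTE ne) !mul0r.
Qed.

Lemma mulmx_tens1mxE (R : comNzRingType) nu r m (W : 'M[R]_r) (B : 'M[R]_(m, nu * r))
    (j : 'I_nu) (b : 'I_r) k :
  (B *m (1%:M *t W)) k (mxtens_index (j, b))
    = \sum_(d < r) B k (mxtens_index (j, d)) * W d b.
Proof.
rewrite mxE big_mxtens_index (bigD1 j) //= [X in _ + X]big1 ?addr0.
  by apply: eq_bigr => d _; rewrite tensmxE mxE eqxx mul1r.
move=> j' ne; apply: big1 => d _.
by rewrite tensmxE mxE (negbTE ne) mul0r mulr0.
Qed.

Lemma Mder_factor (C : fieldType) q r k (z : C) :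
  Mder q r k z = Umx q z *m Ak C q r k *m Wmx r z.
Proof.
apply/matrixP => a b; rewrite !mxE exprD derivnM horner_sum.
under [RHS]eq_bigr => d _ do rewrite mxE mulr_suml.
rewrite exchange_big /=.
pose F c d := ('X^a)^`(c).[z] * 'C(k, c)%:R * ('X^b)^`(d).[z].
transitivity (\sum_(c < q) \sum_(d < r) if (c + d == k)%N then F c d else 0); last first.
  apply: eq_bigr => c _; apply: eq_bigr => d _; rewrite !mxE.
  by case: ifP; rewrite ?mulr0 ?mul0r.
rewrite (@sum_antidiagonal _ q r k F) => [|c d qc|c d rd].
- by apply: eq_bigr => c _; rewrite hornerMn hornerM -mulr_natr mulrAC.
- by rewrite /F (derivn_polyXn_small _ (leq_trans (ltn_ord a) qc)) horner0 !mul0r.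
- by rewrite /F (derivn_polyXn_small _ (leq_trans (ltn_ord b) rd)) horner0 mulr0.
Qed.

Lemma calM_factor (C : fieldType) mu nu q r (z : C) :
  calM mu nu q r z = (1%:M *t Umx q z) *m calA C mu nu q r *m (1%:M *t Wmx r z).
Proof.
apply/matrixP => k l; case: (mxtens_indexP k) => i a; case: (mxtens_indexP l) => j b.
rewrite mulmx_tens1mxE mxE !mxtens_indexK /= Mder_factor !mxE.
apply: eq_bigr => d _; rewrite tens1mx_mulmxE !mxE; congr (_ * _).
by apply: eq_bigr => c _; rewrite !mxE !mxtens_indexK.
Qed.

Lemma Wmx_trmx (C : fieldType) r (z : C) : Wmx r z = (Umx r z)^T.
Proof. by apply/matrixP => i b; rewrite !mxE. Qed.

Lemma Umx_unit (C : numFieldType) q (z : C) : Umx q z \in unitmx.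
Proof.
rewrite unitmxE det_trig; last first.
  by apply/is_trig_mxP => a j aj; rewrite mxE derivn_polyXn_small ?horner0.
rewrite unitfE; apply/prodf_neq0 => a _.
by rewrite mxE derivnXn subnn expr0 hornerMn hornerC pnatr_eq0 ffactnn -lt0n fact_gt0.
Qed.

(* Vandermonde: C(i+j, c) = sum_f C(i, f) C(j, c+f-i).  The bounds on i, j, c, d
   ensure that the window f < minn mu r, e < minn nu q contains every nonzero term. *)
Lemma bin_convolution_window mu nu q r (i : 'I_mu) (j : 'I_nu) (c : 'I_q) (d : 'I_r) :
  (\sum_(f < minn mu r) \sum_(e < minn nu q)
     (if c + f == i + e then 'C(i, f) else 0) * (if j + f == d + e then 'C(j, e) else 0)
   = if c + d == i + j then 'C(i + j, c) else 0)%N.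
Proof.
have [cd|ncd] := eqVneq (c + d)%N (i + j)%N; last first.
  rewrite big1 // => f _; rewrite big1 // => e _.
  by do 2!case: eqP => ? //=; rewrite ?muln0 //; lia.
have -> : 'C(i + j, c) = 'C(i + j, d) by rewrite -bin_sub; [congr 'C(_, _) | ]; lia.
rewrite -binomial.Vandermonde.
apply: (@eq_sum_ord_supp _ _ d.+1 (fun f => \sum_(e < minn nu q)
    (if c + f == i + e then 'C(i, f) else 0) * (if j + f == d + e then 'C(j, e) else 0))
  (fun f => 'C(i, f) * 'C(j, d - f)))%N => f.
have collapse e : ((if c + f == i + e then 'C(i, f) else 0)
    * (if j + f == d + e then 'C(j, e) else 0)
  = if e == c + f - i then if i <= c + f then 'C(i, f) * 'C(j, e) else 0 else 0)%N.
  case: (c + f =P i + e)%N; case: (j + f =P d + e)%N; case: (e =P c + f - i)%N;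
  by case: (leqP i (c + f)) => * /=; rewrite ?muln0 //; lia.
under eq_bigr => e _ do rewrite collapse.
rewrite -big_mkcond (big_ord1_eq _ (fun e => if (i <= c + f)%N then 'C(i, f) * 'C(j, e) else 0)%N).
move: (ltn_ord i) (ltn_ord j) (ltn_ord c) (ltn_ord d) => lt_i lt_j lt_c lt_d.
have [fi|/bin_small->] := leqP f i; last by rewrite !mul0n !if_same.
have [icf|ci] := leqP i (c + f); last first.
  by rewrite (@bin_small j (d - f)) ?muln0 ?if_same //; lia.
have [ej|je] := leqP (c + f - i) j; last first.
  by rewrite (bin_small je) muln0 !if_same ifN //; lia.
have -> : (f < minn mu r)%N by rewrite leq_min; apply/andP; split; lia.
have -> : (c + f - i < minn nu q)%N by rewrite leq_min; apply/andP; split; lia.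
have df : (d - f = j - (c + f - i))%N by lia.
by rewrite ifT ?df ?bin_sub //; lia.
Qed.

Definition calA_lfactor (R : pzRingType) mu nu q r : 'M[R]_(mu * q, minn mu r * minn nu q) :=
  \matrix_(k, l) (let: (i, c) := mxtens_unindex k in let: (f, e) := mxtens_unindex l in
                  if c + f == i + e then 'C(i, f) else 0)%N%:R.

Definition calA_rfactor (R : pzRingType) mu nu q r : 'M[R]_(minn mu r * minn nu q, nu * r) :=
  \matrix_(l, k) (let: (f, e) := mxtens_unindex l in let: (j, d) := mxtens_unindex k in
                  if j + f == d + e then 'C(j, e) else 0)%N%:R.

Lemma calA_rank_factorization (R : pzRingType) mu nu q r :
  calA R mu nu q r = calA_lfactor R mu nu q r *m calA_rfactor R mu nu q r.
Proof.
apply/matrixP => k l; case: (mxtens_indexP k) => i c; case: (mxtens_indexP l) => j d.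
rewrite !mxE !mxtens_indexK /=.
transitivity ((if c + d == i + j then 'C(i + j, c) else 0)%N%:R : R); first by case: ifP.
rewrite -bin_convolution_window natr_sum big_mxtens_index.
apply: eq_bigr => f _; rewrite natr_sum; apply: eq_bigr => e _.
by rewrite natrM !mxE !mxtens_indexK.
Qed.

Lemma row_free_calA_lfactor_tr (K : fieldType) mu nu q r :
  row_free (calA_lfactor K mu nu q r)^T.
Proof.
apply: inj_row_free => v vX0; apply/rowP => l; case: (mxtens_indexP l) => f e; rewrite mxE.
pose T f0 e0 f' e' := (if e0 + f' == f0 + e' then 'C(f0, f') else 0)%N%:R : K.
apply: (@unitriangular_kernel _ _ _ T (fun f e => v 0 (mxtens_index (f, e)))) => {f e}.
- by move=> f f' e e' ff'; rewrite /T bin_small // if_same.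
- by move=> f e e'; rewrite /T binn addnC eqn_add2l val_eqE; case: (e == e').
move=> f e; have := congr1 (fun w : 'rV_(mu * q) => w 0 (mxtens_index
  (widen_ord (geq_minl mu r) f, widen_ord (geq_minr nu q) e))) vX0.
rewrite !mxE big_mxtens_index => vX0_fe; rewrite -[RHS]vX0_fe.
apply: eq_bigr => f' _; apply: eq_bigr => e' _.
by rewrite !mxE !mxtens_indexK.
Qed.

Lemma row_free_calA_rfactor (K : fieldType) mu nu q r :
  row_free (calA_rfactor K mu nu q r).
Proof.
apply: inj_row_free => v vY0; apply/rowP => l; case: (mxtens_indexP l) => f e; rewrite mxE.
pose T e0 f0 e' f' := (if e0 + f' == f0 + e' then 'C(e0, e') else 0)%N%:R : K.
apply: (@unitriangular_kernel _ _ _ T (fun e f => v 0 (mxtens_index (f, e)))) => {f e}.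
- by move=> e e' f f' ee'; rewrite /T bin_small // if_same.
- by move=> e f f'; rewrite /T binn addnC eqn_add2r val_eqE eq_sym; case: (f == f').
move=> e f; have := congr1 (fun w : 'rV_(nu * r) => w 0 (mxtens_index
  (widen_ord (geq_minl nu q) e, widen_ord (geq_minr mu r) f))) vY0.
rewrite !mxE big_mxtens_index exchange_big => vY0_ef; rewrite -[RHS]vY0_ef.
apply: eq_bigr => e' _; apply: eq_bigr => f' _.
by rewrite !mxE !mxtens_indexK.
Qed.

Lemma mxrank_calA (K : fieldType) mu nu q r :
  \rank (calA K mu nu q r) = (minn mu r * minn nu q)%N.
Proof.
rewrite calA_rank_factorization mxrankMfree ?row_free_calA_rfactor //.
by rewrite -mxrank_tr; apply/eqP/row_free_calA_lfactor_tr.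
Qed.

Lemma map_calA (R1 R2 : pzRingType) (f : {rmorphism R1 -> R2}) mu nu q r :
  map_mx f (calA R1 mu nu q r) = calA R2 mu nu q r.
Proof. by apply/matrixP => k l; rewrite !mxE; case: ifP; rewrite ?rmorph_nat ?rmorph0. Qed.

Theorem proposition3p1 (R : realType) (q r mu nu : nat) :
  (0 < q)%N -> (0 < r)%N -> (0 < mu)%N -> (0 < nu)%N ->
  (forall z : R[i],
     calM mu nu q r z =
       ((1%:M : 'M[R[i]]_mu) *t Umx q z) *m map_mx (real_complex R) (calA R mu nu q r)
         *m ((1%:M : 'M[R[i]]_nu) *t Wmx r z))
  /\ (forall z : R[i], \rank (calM mu nu q r z) = \rank (calA R mu nu q r))
  /\ \rank (calA R mu nu q r) = (minn mu r * minn nu q)%N.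
Proof.
move=> /lt0n_neq0 q0 /lt0n_neq0 r0 /lt0n_neq0 mu0 /lt0n_neq0 nu0.
have calM_eq z : calM mu nu q r z = (1%:M *t Umx q z)
    *m map_mx (real_complex R) (calA R mu nu q r) *m (1%:M *t Wmx r z).
  by rewrite map_calA calM_factor.
split=> //; split=> [z|]; last exact: mxrank_calA.
have U_unit : (1%:M : 'M_mu) *t Umx q z \in unitmx by rewrite tensmx_unit ?unitmx1 ?Umx_unit.
have W_unit : (1%:M : 'M_nu) *t Wmx r z \in unitmx.
  by rewrite tensmx_unit ?unitmx1 // Wmx_trmx unitmx_tr Umx_unit.
rewrite calM_eq map_calA mxrankMfree ?row_free_unit //.
by rewrite eqmxMfull ?row_full_unit // !mxrank_calA.
Qed.
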